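(* Let $\Bbbk$ be a field of characteristic zero. The algebra $A=\Bbbk[x_1,\ldots,x_6]/(x_1^3,x_2^3,x_3^3,x_4^3,x_5^3,x_6^3,x_1 x_2 x_3)$ fails the WLP in degree $5$.
   Context: For a monomial quotient $A$, $A$ fails the WLP in degree $i$ if $\times(x_1+\cdots+x_6): A_i\to A_{i+1}$ is neither injective nor surjective. *)

From HB Require Import structures.
From mathcomp Require Import all_boot all_order all_algebra.
From mathcomp Require Import mpoly.
Set Implicit Arguments. Unset Strict Implicit. Unset Printing Implicit Defensive.
Import GRing.Theory.
Local Open Scope ring_scope.

(* Polynomial ring k[x_1,...,x_6]; variables indexed by 'I_6 (x_{i+1} = 'X_i). *)
Definition var (k : fieldType) (i : nat) : {mpoly k[6]} := 'X_(inord i).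

Definition inI (k : fieldType) (p : {mpoly k[6]}) : Prop :=
  exists (c : 'I_6 -> {mpoly k[6]}) (d : {mpoly k[6]}),
    p = \sum_(i < 6) c i * 'X_i ^+ 3 + d * (var k 0 * var k 1 * var k 2).

Definition ell (k : fieldType) : {mpoly k[6]} := \sum_(i < 6) 'X_i.

(* A = k[x]/I is graded with A_i = R_i / (I cap R_i) (I is homogeneous).
   The multiplication map  x l : A_i -> A_{i+1}, [p] |-> [l p].  *)
Definition mul_ell_injective (k : fieldType) (i : nat) : Prop :=
  forall p : {mpoly k[6]}, p \is i.-homog -> inI (ell k * p) -> inI p.

Definition mul_ell_surjective (k : fieldType) (i : nat) : Prop :=
  forall q : {mpoly k[6]}, q \is i.+1.-homog ->
    exists p : {mpoly k[6]}, p \is i.-homog /\ inI (q - ell k * p).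

Definition fails_WLP_in_degree (k : fieldType) (i : nat) : Prop :=
  ~ mul_ell_injective k i /\ ~ mul_ell_surjective k i.

From HB Require Import structures.
From mathcomp Require Import all_boot all_order all_algebra.
From mathcomp Require Import mpoly ring.
Import GRing.Theory.
Local Open Scope ring_scope.
Set Implicit Arguments. Unset Strict Implicit. Unset Printing Implicit Defensive.

(* Both failures are witnessed by linear functionals [p |-> sum_m p_m w(m)]
   given by weights [w] on monomials; such a functional vanishes on I as soon
   as [w] is supported on the standard monomials (those outside I).

   Not injective: p = (x1^2+x2^2+x3^2-x1x2-x1x3-x2x3)(x4-x5)(x4-x6)(x5-x6)
   has coefficient -1 at the standard monomial x3^2 x5 x6^2, so p is not in I,
   whereas l p is in I because (x1+x2+x3) times the first factor is
   x1^3+x2^3+x3^3-3x1x2x3 and (x4+x5+x6) times the Vandermonde product is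
   x4^3(x5-x6)+x5^3(x6-x4)+x6^3(x4-x5).

   Not surjective: let e(a,b,c) be the sign of (a,b,c) as a permutation of
   (0,1,2), and 0 if it is not one.  The weight e(m1,m2,m3) e(m4,m5,m6) is
   supported on standard monomials and, since
   e(a+1,b,c) + e(a,b+1,c) + e(a,b,c+1) = 0, kills l R_5; it is 1 at
   x2 x3^2 x5 x6^2, which is therefore not in l A_5.  Neither argument uses
   the characteristic. *)

Section MonomialWeight.
Variables (n : nat) (R : nzRingType).
Implicit Types (w : 'X_{1..n} -> R) (p : {mpoly R[n]}).

Definition mweight w p : R := \sum_(m <- msupp p) p@_m * w m.

Lemma mweightE w p r : uniq r -> {subset msupp p <= r} ->
  mweight w p = \sum_(m <- r) p@_m * w m.
Proof.
move=> r_uniq supp_r; rewrite [RHS](bigID (mem (msupp p))) /=.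
rewrite [X in _ + X]big1 ?addr0; last first.
  by move=> m /memN_msupp_eq0 ->; rewrite mul0r.
rewrite -big_filter; apply: perm_big; apply: uniq_perm (msupp_uniq p) _ _.
  exact: filter_uniq.
by move=> m; rewrite mem_filter andb_idr //; apply: supp_r.
Qed.

Lemma mweight_is_zmod_morphism w : zmod_morphism (mweight w).
Proof.
move=> p q; set r := undup (msupp p ++ msupp q).
have sub_r s : {subset msupp s <= msupp p ++ msupp q} -> {subset msupp s <= r}.
  by move=> sub m /sub; rewrite mem_undup.
rewrite !(@mweightE w _ r) ?undup_uniq //;
  last by apply: sub_r; exact: msuppB_le.
- by rewrite -sumrB; apply: eq_bigr => m _; rewrite mcoeffB mulrBl.
- by apply: sub_r => m; rewrite mem_cat orbC => ->.
- by apply: sub_r => m; rewrite mem_cat => ->.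
Qed.

HB.instance Definition _ w :=
  GRing.isZmodMorphism.Build {mpoly R[n]} R (mweight w)
    (mweight_is_zmod_morphism w).

Lemma mweightZ w c p : mweight w (c *: p) = c * mweight w p.
Proof.
rewrite (@mweightE _ _ (msupp p)) ?msupp_uniq //; last exact: msuppZ_le.
by rewrite mulr_sumr; apply: eq_bigr => m _; rewrite mcoeffZ mulrA.
Qed.

Lemma mweightX w m : mweight w 'X_[m] = w m.
Proof. by rewrite /mweight msuppX big_seq1 mcoeffX eqxx mul1r. Qed.

Lemma mcoeff_mweight m p : p@_m = mweight (fun m' => (m' == m)%:R) p.
Proof.
rewrite {1}[p]mpolyE raddf_sum /=; apply: eq_bigr => m' _.
by rewrite mcoeffZ mcoeffX.
Qed.

Lemma mweight_mulX w p g :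
  mweight w (p * 'X_[g]) = mweight (fun m => w (m + g)%MM) p.
Proof.
rewrite {1}[p]mpolyE mulr_suml raddf_sum; apply: eq_bigr => m _ /=.
by rewrite -scalerAl -mpolyXD mweightZ mweightX.
Qed.

Lemma mweight_mulX_eq0 w p g :
  (forall m, w (m + g)%MM = 0) -> mweight w (p * 'X_[g]) = 0.
Proof.
by move=> wg0; rewrite mweight_mulX /mweight big1 // => m _; rewrite wg0 mulr0.
Qed.

Lemma mweight_sumX_mul_eq0 w p :
  (forall m, \sum_(i < n) w (m + U_(i))%MM = 0) ->
  mweight w ((\sum_(i < n) 'X_i) * p) = 0.
Proof.
move=> w_shift; rewrite mulr_suml raddf_sum /=.
under eq_bigr => i _ do rewrite -commr_mpolyX mweight_mulX.
rewrite exchange_big big1 // => m _.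
by rewrite -mulr_sumr w_shift mulr0.
Qed.

End MonomialWeight.

Definition mnm6 (a b c d e f : nat) : 'X_{1..6} :=
  [multinom of [:: a; b; c; d; e; f]].

Lemma mnm6E a b c d e f j : (j < 6)%N ->
  mnm6 a b c d e f (inord j) = nth 0%N [:: a; b; c; d; e; f] j.
Proof. by move=> lt_j6; rewrite multinomE (tnth_nth 0%N) inordK. Qed.

Lemma big_ord6 (T : Type) (idx : T) (op : Monoid.law idx) (F : 'I_6 -> T) :
  \big[op/idx]_(i < 6) F i =
  op (F (inord 0)) (op (F (inord 1)) (op (F (inord 2))
    (op (F (inord 3)) (op (F (inord 4)) (F (inord 5)))))).
Proof.
rewrite !big_ord_recl big_ord0 Monoid.mulm1.
by congr (op (F _) (op (F _) (op (F _) (op (F _) (op (F _) (F _))))));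
  apply/val_inj; rewrite /= inordK.
Qed.

Lemma mnm6D a b c d e f a' b' c' d' e' f' :
  (mnm6 a b c d e f + mnm6 a' b' c' d' e' f')%MM =
  mnm6 (a + a') (b + b') (c + c') (d + d') (e + e') (f + f').
Proof.
apply/mnmP => i; rewrite mnmDE -[i]inord_val.
by case: i => -[|[|[|[|[|[|//]]]]]] /= _; rewrite !mnm6E.
Qed.

Lemma mpolyX_mnm6 (R : nzRingType) a b c d e f :
  'X_[mnm6 a b c d e f] = 'X_(inord 0) ^+ a * ('X_(inord 1) ^+ b *
    ('X_(inord 2) ^+ c * ('X_(inord 3) ^+ d * ('X_(inord 4) ^+ e *
    'X_(inord 5) ^+ f)))) :> {mpoly R[6]}.
Proof. by rewrite mpolyXE_id big_ord6 !mnm6E. Qed.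

Definition standard_mnm (m : 'X_{1..6}) : bool :=
  [forall i, m i < 3]%N &&
  [|| m (inord 0) == 0%N, m (inord 1) == 0%N | m (inord 2) == 0%N].

Lemma standard_mnmE m : standard_mnm m =
  [&& m (inord 0) < 3, m (inord 1) < 3, m (inord 2) < 3, m (inord 3) < 3,
      m (inord 4) < 3, m (inord 5) < 3
    & [|| m (inord 0) == 0, m (inord 1) == 0 | m (inord 2) == 0]]%N.
Proof.
rewrite /standard_mnm -[[forall i, _]]/[forall (i | true), m i < 3]%N.
by rewrite -big_andE big_ord6 /= !andbA.
Qed.

Lemma inord6_eq (i j : nat) : (i < 6)%N -> (j < 6)%N ->
  ((inord i : 'I_6) == inord j) = (i == j).
Proof. by move=> lt_i6 lt_j6; rewrite -val_eqE /= !inordK. Qed.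

Lemma mweight_inI (k : fieldType) (w : 'X_{1..6} -> k) p :
  (forall m, ~~ standard_mnm m -> w m = 0) -> inI p -> mweight w p = 0.
Proof.
move=> w_std [c [d ->]]; rewrite raddfD raddf_sum /= big1 ?add0r => [|i _].
  rewrite /var -!mpolyXD; apply: mweight_mulX_eq0 => m; apply: w_std.
  by rewrite /standard_mnm !mnmDE !mnm1E !inord6_eq //= !addn1 andbF.
rewrite mpolyXn; apply: mweight_mulX_eq0 => m; apply: w_std.
rewrite /standard_mnm negb_and; apply/orP; left; rewrite negb_forall.
by apply/existsP; exists i; rewrite mnmDE mulmnE mnm1E eqxx -leqNgt leq_addl.
Qed.

Lemma mcoeff_inI (k : fieldType) m (p : {mpoly k[6]}) :
  standard_mnm m -> inI p -> p@_m = 0.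
Proof.
move=> std_m Ip; rewrite mcoeff_mweight (mweight_inI _ Ip) // => m' nstd_m'.
by case: eqP nstd_m' => // ->; rewrite std_m.
Qed.

Section CubicIdentities.
Variable R : comNzRingType.
Implicit Types a b c : R.

Definition vdm3 a b c : R := (a - b) * (a - c) * (b - c).

Definition quad3 a b c : R :=
  a ^+ 2 + b ^+ 2 + c ^+ 2 - a * b - a * c - b * c.

Lemma sum_mul_quad3 a b c :
  (a + b + c) * quad3 a b c = a ^+ 3 + b ^+ 3 + c ^+ 3 - 3 * (a * b * c).
Proof. by rewrite /quad3; ring. Qed.

Lemma sum_mul_vdm3 a b c :
  (a + b + c) * vdm3 a b c =
  a ^+ 3 * (b - c) + b ^+ 3 * (c - a) + c ^+ 3 * (a - b).
Proof. by rewrite /vdm3; ring. Qed.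

End CubicIdentities.

Section Kernel.
Variable k : fieldType.
Local Notation v := (var k).

Definition kernel_elt : {mpoly k[6]} :=
  quad3 (v 0) (v 1) (v 2) * vdm3 (v 3) (v 4) (v 5).

Lemma quad3_var : quad3 (v 0) (v 1) (v 2) =
  'X_[mnm6 2 0 0 0 0 0] + 'X_[mnm6 0 2 0 0 0 0] + 'X_[mnm6 0 0 2 0 0 0]
  - 'X_[mnm6 1 1 0 0 0 0] - 'X_[mnm6 1 0 1 0 0 0] - 'X_[mnm6 0 1 1 0 0 0].
Proof. by rewrite !mpolyX_mnm6 /quad3 /var; ring. Qed.

Lemma vdm3_var : vdm3 (v 3) (v 4) (v 5) =
  'X_[mnm6 0 0 0 2 1 0] - 'X_[mnm6 0 0 0 2 0 1] - 'X_[mnm6 0 0 0 1 2 0]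
  + 'X_[mnm6 0 0 0 1 0 2] + 'X_[mnm6 0 0 0 0 2 1] - 'X_[mnm6 0 0 0 0 1 2].
Proof. by rewrite !mpolyX_mnm6 /vdm3 /var; ring. Qed.

Lemma kernel_elt_homog : kernel_elt \is 5.-homog.
Proof.
rewrite /kernel_elt quad3_var vdm3_var.
apply: (dhomogM (d := 2%N) (e := 3%N));
  by rewrite ?(rpredB, rpredD) // dhomogX /= mdegE big_ord6 !mnm6E.
Qed.

Lemma mcoeff_kernel_elt : kernel_elt@_(mnm6 0 0 2 0 1 2) = -1.
Proof.
rewrite /kernel_elt quad3_var vdm3_var.
rewrite !(mulrDl, mulrDr, mulrBl, mulrBr, mulrN, mulNr, opprK) -!mpolyXD.
rewrite !mnm6D !(mcoeffD, mcoeffN) !mcoeffX /=.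
by rewrite !(addr0, add0r, subr0, sub0r, oppr0).
Qed.

Lemma ell_mul_kernel_elt_inI : inI (ell k * kernel_elt).
Proof.
pose F := quad3 (v 0) (v 1) (v 2); pose D := vdm3 (v 3) (v 4) (v 5).
exists (fun i : 'I_6 =>
  nth 0 [:: D; D; D; F * (v 4 - v 5); F * (v 5 - v 3); F * (v 3 - v 4)] i).
exists (- 3 * D).
transitivity ((v 0 + v 1 + v 2) * F * D + F * ((v 3 + v 4 + v 5) * D)).
  by rewrite /ell big_ord6 /= /kernel_elt /var -/F -/D; ring.
by rewrite sum_mul_quad3 sum_mul_vdm3 big_ord6 !inordK //= /var; ring.
Qed.

End Kernel.

Definition alt3 (a b c : nat) : int :=
  match a, b, c with
  | 0, 1, 2 | 1, 2, 0 | 2, 0, 1 => 1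
  | 0, 2, 1 | 2, 1, 0 | 1, 0, 2 => -1
  | _, _, _ => 0
  end.

Lemma alt3_shift a b c : alt3 a.+1 b c + alt3 a b.+1 c + alt3 a b c.+1 = 0.
Proof.
by case: a => [|[|[|a]]]; case: b => [|[|[|b]]]; case: c => [|[|[|c]]].
Qed.

Lemma alt3_neq0 a b c : alt3 a b c != 0 ->
  [&& (a < 3)%N, (b < 3)%N, (c < 3)%N & [|| a == 0%N, b == 0%N | c == 0%N]].
Proof.
by case: a => [|[|[|a]]]; case: b => [|[|[|b]]]; case: c => [|[|[|c]]].
Qed.

Definition alt3x3 (m : 'X_{1..6}) : int :=
  alt3 (m (inord 0)) (m (inord 1)) (m (inord 2)) *
  alt3 (m (inord 3)) (m (inord 4)) (m (inord 5)).

Lemma alt3x3_standard m : alt3x3 m != 0 -> standard_mnm m.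
Proof.
rewrite mulf_eq0 negb_or => /andP[/alt3_neq0/and4P[lt0 lt1 lt2 has0]].
move=> /alt3_neq0/and4P[lt3 lt4 lt5 _].
by rewrite standard_mnmE lt0 lt1 lt2 lt3 lt4 lt5.
Qed.

Lemma alt3x3_shift m : \sum_(i < 6) alt3x3 (m + U_(i))%MM = 0.
Proof.
rewrite big_ord6 /alt3x3 !mnmDE !mnm1E !inord6_eq //= !addn0 !addn1.
set a := m (inord 0); set b := m (inord 1); set c := m (inord 2).
set d := m (inord 3); set e := m (inord 4); set f := m (inord 5).
have shift_abc := alt3_shift a b c; have shift_def := alt3_shift d e f.
transitivity ((alt3 a.+1 b c + alt3 a b.+1 c + alt3 a b c.+1) * alt3 d e f +
  alt3 a b c * (alt3 d.+1 e f + alt3 d e.+1 f + alt3 d e f.+1)); first by ring.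
by rewrite shift_abc shift_def mul0r mulr0 addr0.
Qed.

Lemma not_mul_ell_surjective (k : fieldType) : ~ mul_ell_surjective k 5.
Proof.
pose s := mnm6 0 1 2 0 1 2; pose w (m : 'X_{1..6}) : k := (alt3x3 m)%:~R.
have w_std m : ~~ standard_mnm m -> w m = 0.
  by move/(contraNN (@alt3x3_standard m)); rewrite negbK /w => /eqP ->.
have w_shift m : \sum_(i < 6) w (m + U_(i))%MM = 0.
  by rewrite -rmorph_sum /= alt3x3_shift.
move=> surj; have [|p [_ /(mweight_inI w_std)]] := surj 'X_[s].
  by rewrite dhomogX /= mdegE big_ord6 !mnm6E.
rewrite raddfB /= mweight_sumX_mul_eq0 // subr0 mweightX /w /alt3x3 !mnm6E //=.
by move/eqP; rewrite oner_eq0.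
Qed.

Lemma not_mul_ell_injective (k : fieldType) : ~ mul_ell_injective k 5.
Proof.
move=> inj.
have kernel_elt_inI := inj _ (kernel_elt_homog k) (ell_mul_kernel_elt_inI k).
have std : standard_mnm (mnm6 0 0 2 0 1 2) by rewrite standard_mnmE !mnm6E.
have := mcoeff_inI std kernel_elt_inI.
by rewrite mcoeff_kernel_elt => /eqP; rewrite oppr_eq0 oner_eq0.
Qed.

Theorem lemma5p5 (k : fieldType) (hchar : [pchar k] =i pred0) :
  fails_WLP_in_degree k 5.
Proof.
by split; [exact: not_mul_ell_injective | exact: not_mul_ell_surjective].
Qed.
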